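(* If $G$ is a $\mathrm{sat}(n,K_{2,3})$-graph with minimum degree $\delta(G) = 1$, then $e(G) \geq 2n-3$.
   Context: All graphs are finite and simple. A graph $G$ is $K_{2,3}$-saturated if $G$ contains no subgraph isomorphic to $K_{2,3}$, but for every pair of nonadjacent vertices $u,v$, the graph $G+uv$ contains a subgraph isomorphic to $K_{2,3}$. $\mathrm{sat}(n,K_{2,3})$ is the minimum number of edges of a $K_{2,3}$-saturated graph on $n$ vertices, and a $\mathrm{sat}(n,K_{2,3})$-graph is a $K_{2,3}$-saturated graph on $n$ vertices with exactly $\mathrm{sat}(n,K_{2,3})$ edges. $e(G)$ is the number of edges and $\delta(G)$ the minimum degree of $G$. *)

From mathcomp Require Import all_boot.
Set Implicit Arguments. Unset Strict Implicit. Unset Printing Implicit Defensive.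

Record sgraph (n : nat) := SGraph {
  adj : rel 'I_n;
  adj_sym : symmetric adj;
  adj_irr : irreflexive adj }.

Definition nedges n (G : sgraph n) : nat :=
  #|[set p : 'I_n * 'I_n | (p.1 < p.2) && adj G p.1 p.2]|.

Definition deg n (G : sgraph n) (v : 'I_n) : nat := #|[set u | adj G v u]|.

Definition min_degree_is n (G : sgraph n) (d : nat) : Prop :=
  (exists v, deg G v = d) /\ (forall v, d <= deg G v).

Definition has_K23 n (r : rel 'I_n) : Prop :=
  exists a1 a2 b1 b2 b3 : 'I_n,
    uniq [:: a1; a2; b1; b2; b3] /\
    [/\ r a1 b1, r a1 b2, r a1 b3 & [/\ r a2 b1, r a2 b2 & r a2 b3]].

Definition add_edge n (r : rel 'I_n) (u v : 'I_n) : rel 'I_n :=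
  fun x y => [|| r x y, (x == u) && (y == v) | (x == v) && (y == u)].

Definition K23_saturated n (G : sgraph n) : Prop :=
  ~ has_K23 (adj G) /\
  forall u v : 'I_n, u != v -> ~~ adj G u v -> has_K23 (add_edge (adj G) u v).

(* G is a sat(n,K_{2,3})-graph: K_{2,3}-saturated with the minimum number of
   edges among all K_{2,3}-saturated graphs on n vertices,
   i.e. e(G) = sat(n,K_{2,3}) *)
Definition sat_K23_graph n (G : sgraph n) : Prop :=
  K23_saturated G /\ forall H : sgraph n, K23_saturated H -> nedges G <= nedges H.

From mathcomp Require Import all_boot zify.
Set Implicit Arguments. Unset Strict Implicit. Unset Printing Implicit Defensive.

(* Let v be a leaf with neighbour w and let A be the set of the other
   neighbours of w. For x outside {v, w}, the copy of K_{2,3} created by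
   adding vx must contain v, and since v then has degree 2 it lies in the
   part of size 3, whose part of size 2 is {w, x}: so x has two neighbours
   in A. Hence every vertex of A has degree at least 3 inside A + w, and
   every other vertex x sends at least two edges into A; charging each
   edge into A to its endpoint outside A gives a degree sum of at least
   4n - 6. *)

Lemma sum_nat_pred1 (T : finType) (c : T) : \sum_y (y == c : nat) = 1.
Proof. by rewrite (bigD1 c) //= eqxx big1 // => y /negbTE ->. Qed.

Lemma sum_sym_rel_split (T : finType) (r : rel T) (A : pred T) :
  symmetric r ->
  \sum_x \sum_y r x y = \sum_x (\sum_(y | A y) r x y + ~~ A x * \sum_y r x y).
Proof.
move=> rsym.
have -> : \sum_x \sum_y (r x y : nat) =
          \sum_x \sum_(y | A y) r x y + \sum_x \sum_(y | ~~ A y) r x y.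
  by rewrite -big_split; apply: eq_bigr => x _; rewrite [LHS](bigID A).
rewrite big_split; congr (_ + _); rewrite exchange_big big_mkcond /=.
apply: eq_bigr => x _; case: (A x); rewrite ?mul0n ?mul1n //=.
by apply: eq_bigr => y _; rewrite rsym.
Qed.

Section DegreeSum.
Variables (n : nat) (G : sgraph n).

Lemma deg_sum v : deg G v = \sum_u adj G v u.
Proof.
by rewrite /deg -sum1_card big_mkcond; apply: eq_bigr => u _; rewrite inE; case: adj.
Qed.

Lemma nedges_sum :
  nedges G = \sum_(x : 'I_n) \sum_(y : 'I_n) ((x < y) && adj G x y : nat).
Proof.
rewrite /nedges -sum1_card big_mkcond pair_big /=.
by apply: eq_bigr => p _; rewrite inE; case: andP.
Qed.

Lemma handshake : \sum_v deg G v = 2 * nedges G.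
Proof.
have split_adj (x y : 'I_n) :
    (adj G x y : nat) = ((x < y) && adj G x y : nat) + ((y < x) && adj G x y).
  by case: ltngtP => [||/val_inj ->]; rewrite ?adj_irr //; case: adj.
transitivity (\sum_(x : 'I_n) \sum_(y : 'I_n) ((x < y) && adj G x y : nat)
              + \sum_(x : 'I_n) \sum_(y : 'I_n) ((y < x) && adj G x y)).
  rewrite -big_split; apply: eq_bigr => x _.
  by rewrite deg_sum -big_split; apply: eq_bigr => y _; apply: split_adj.
rewrite [X in _ + X]exchange_big /= -nedges_sum.
under [X in _ + X]eq_bigr do under eq_bigr do rewrite adj_sym.
by rewrite -nedges_sum addnn -mul2n.
Qed.

End DegreeSum.

Section K23.
Variable T : eqType.
Implicit Type r : rel T.

Definition K23_on r (a1 a2 b1 b2 b3 : T) : Prop :=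
  uniq [:: a1; a2; b1; b2; b3] /\
  [/\ r a1 b1, r a1 b2, r a1 b3 & [/\ r a2 b1, r a2 b2 & r a2 b3]].

Lemma K23_on_swap_pair r (a1 a2 b1 b2 b3 : T) :
  K23_on r a1 a2 b1 b2 b3 -> K23_on r a2 a1 b1 b2 b3.
Proof.
case=> uniq_ab [? ? ? [? ? ?]]; split=> //.
by rewrite (perm_uniq (introT permPl (perm_catCA [:: a2] [:: a1] _))).
Qed.

Lemma K23_on_rot_triple r (a1 a2 b1 b2 b3 : T) :
  K23_on r a1 a2 b1 b2 b3 -> K23_on r a1 a2 b2 b3 b1.
Proof.
case=> uniq_ab [? ? ? [? ? ?]]; split=> //.
rewrite (perm_uniq (s2 := [:: a1; a2; b1; b2; b3])) // !perm_cons.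
exact: (introT permPl (perm_rot 1 [:: b1; b2; b3])).
Qed.

Lemma K23_on_pair_deg2 r (v w x a2 b1 b2 b3 : T) :
  (forall y, r v y -> (y == w) || (y == x)) -> ~ K23_on r v a2 b1 b2 b3.
Proof.
move=> small_v [/= /and3P[_ _ uniq_b] [vb1 vb2 vb3 _]].
have sub_b : {subset [:: b1; b2; b3] <= [:: w; x]}.
  by move=> y /[!inE] /or3P[]/eqP->; apply: small_v.
by have := uniq_leq_size (uniq_b : uniq [:: b1; b2; b3]) sub_b.
Qed.

Lemma K23_on_triple_deg2 r (v w x a1 a2 c d : T) :
  (forall y, r y v -> (y == w) || (y == x)) -> K23_on r a1 a2 v c d ->
  [/\ c != d, c != v, d != v & forall z, z \in [:: w; x] -> r z c && r z d].
Proof.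
move=> small_v [uniq_ab [a1v a1c a1d [a2v a2c a2d]]].
move: uniq_ab; rewrite /= !inE !negb_or -!andbA.
case/and5P=> a12 _ _ _ /and5P[_ _ _ vc /and3P[vd cd _]].
have sub_a : {subset [:: a1; a2] <= [:: w; x]}.
  by move=> y /[!inE] /orP[]/eqP->; apply: small_v.
have uniq_a : uniq [:: a1; a2] by rewrite /= inE a12.
have [_ same_a] := uniq_min_size uniq_a sub_a (leqnn 2).
split; [exact: cd | by rewrite eq_sym | by rewrite eq_sym | move=> z].
rewrite -same_a !inE.
by case/orP=> /eqP->; apply/andP.
Qed.

End K23.

Section AddEdge.
Variables (n : nat) (r : rel 'I_n) (u x : 'I_n).

Lemma add_edge_off p q : p != u -> q != u -> add_edge r u x p q = r p q.
Proof. by move=> /negbTE pu /negbTE qu; rewrite /add_edge pu qu /= andbF !orbF. Qed.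

Lemma add_edge_sym : symmetric r -> symmetric (add_edge r u x).
Proof.
move=> rsym p q; rewrite /add_edge rsym; congr (_ || _).
by rewrite orbC andbC (andbC (q == x)).
Qed.

End AddEdge.

Lemma add_edge_leaf_K23 n (r : rel 'I_n) (v w x : 'I_n) :
  symmetric r -> irreflexive r -> (forall y, r v y = (y == w)) -> x != v ->
  ~ has_K23 r -> has_K23 (add_edge r v x) ->
  exists c d, [/\ c != d, r x c, r x d, r w c & r w d].
Proof.
move=> rsym rirr leaf xv noK [a1 [a2 [b1 [b2 [b3 K]]]]].
have vw : r v w by rewrite leaf.
have wv : w != v by apply: contraTneq vw => ->; rewrite rirr.
set s := add_edge r v x in K.
have s_off p q : p != v -> q != v -> s p q = r p q by apply: add_edge_off.
have s_leaf y : s v y -> (y == w) || (y == x).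
  rewrite /s /add_edge eqxx leaf /= => /or3P[-> // | yx | /andP[vx _]].
  - by rewrite yx orbT.
  - by rewrite eq_sym vx in xv.
have s_leaf' y : s y v -> (y == w) || (y == x).
  by rewrite /s (add_edge_sym _ _ rsym); apply: s_leaf.
have from_triple a1' a2' c d : K23_on s a1' a2' v c d ->
    exists c d, [/\ c != d, r x c, r x d, r w c & r w d].
  case/(K23_on_triple_deg2 s_leaf') => cd cv dv common.
  have /andP[wc wd] := common w (mem_head _ _).
  have /andP[xc xd] : s x c && s x d by apply: common; rewrite !inE eqxx orbT.
  by exists c, d; rewrite -!s_off.
have [a1v|a1v] := eqVneq a1 v.
  by rewrite a1v in K; case: (K23_on_pair_deg2 s_leaf K).
have [a2v|a2v] := eqVneq a2 v.
  by rewrite a2v in K; case: (K23_on_pair_deg2 s_leaf (K23_on_swap_pair K)).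
have [b1v|b1v] := eqVneq b1 v; first by rewrite b1v in K; apply: from_triple K.
have [b2v|b2v] := eqVneq b2 v.
  by rewrite b2v in K; apply: from_triple (K23_on_rot_triple K).
have [b3v|b3v] := eqVneq b3 v.
  by rewrite b3v in K; apply: from_triple (K23_on_rot_triple (K23_on_rot_triple K)).
case: noK; exists a1, a2, b1, b2, b3.
by case: K => uniq_ab; rewrite !s_off.
Qed.

Lemma sum_nat_mull (T : finType) (k : nat) (F : T -> nat) :
  \sum_x k * F x = k * \sum_x F x.
Proof. by rewrite big_distrr. Qed.

Lemma two_le_sum (T : finType) (P F : pred T) (c d : T) :
  c != d -> P c -> P d -> F c -> F d -> 2 <= \sum_(y | P y) F y.
Proof.
move=> cd Pc Pd Fc Fd; rewrite (bigD1 c) // (bigD1 d) /=; last by rewrite Pd eq_sym cd.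
by rewrite Fc Fd.
Qed.

Section LeafCounting.
Variables (n : nat) (G : sgraph n) (v w : 'I_n).
Hypothesis leaf_adj : forall y, adj G v y = (y == w).
Hypothesis common_nbrs : forall x, x != v -> x != w ->
  exists c d, [/\ c != d, adj G x c, adj G x d, adj G w c & adj G w d].

Let A y := adj G w y && (y != v).
Let a := \sum_y (A y : nat).

(* The ordered adjacent pair (x, y) is charged to x if y is in A, and to y
   otherwise, so the weights add up to the degree sum. *)
Let weight x := \sum_(y | A y) adj G x y + ~~ A x * deg G x.

Let adj_leaf_hub : adj G v w. Proof. by rewrite leaf_adj. Qed.
Let hub_neq_leaf : w != v.
Proof. by apply: contraTneq adj_leaf_hub => ->; rewrite adj_irr. Qed.
Let A_hub : A w = false. Proof. by rewrite /A adj_irr. Qed.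
Let A_leaf : A v = false. Proof. by rewrite /A eqxx andbF. Qed.

Lemma sum_weight : \sum_x weight x = 2 * nedges G.
Proof.
rewrite -handshake (eq_bigr _ (fun x _ => deg_sum G x)).
rewrite (sum_sym_rel_split A (@adj_sym _ G)).
by apply: eq_bigr => x _; rewrite /weight deg_sum.
Qed.

Lemma weight_leaf : weight v = 1.
Proof.
rewrite /weight A_leaf deg_sum big1 => [|y]; last first.
  by rewrite leaf_adj; case: eqVneq => // ->; rewrite A_hub.
by under eq_bigr do rewrite leaf_adj; rewrite sum_nat_pred1.
Qed.

Lemma weight_hub : weight w = 2 * a + 1.
Proof.
have nbrs_w y : adj G w y = A y + (y == v) :> nat.
  rewrite /A; case: eqVneq => [->|_]; last by rewrite andbT addn0.
  by rewrite adj_sym adj_leaf_hub andbF.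
rewrite /weight A_hub deg_sum.
have -> : \sum_(y | A y) adj G w y = a.
  by rewrite big_mkcond; apply: eq_bigr => y _; rewrite /A; case: adj.
have -> : \sum_y adj G w y = a + 1.
  by under eq_bigr do rewrite nbrs_w; rewrite big_split sum_nat_pred1.
lia.
Qed.

Lemma weight_other x : x != v -> x != w -> 4 <= weight x + 2 * A x.
Proof.
move=> xv xw; have [c [d [cd xc xd wc wd]]] := common_nbrs xv xw.
have nbr_neq_leaf y : adj G x y -> y != v.
  by apply: contraTneq => ->; rewrite adj_sym leaf_adj.
have Ac : A c by rewrite /A wc (nbr_neq_leaf _ xc).
have Ad : A d by rewrite /A wd (nbr_neq_leaf _ xd).
have := two_le_sum cd Ac Ad xc xd.
have := two_le_sum (P := predT) cd erefl erefl xc xd.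
rewrite /weight -deg_sum; case: (A x) => /=; lia.
Qed.

(* The correction terms make the bound uniform in x; summed over all x it
   reads 4n + 2a <= 2e + 2a + 6. *)
Lemma weight_lower x :
  4 + 2 * a * (x == w) <= weight x + 2 * A x + 3 * (x == v) + 3 * (x == w).
Proof.
have [-> | xv] := eqVneq x v.
  by rewrite weight_leaf eq_sym (negbTE hub_neq_leaf) A_leaf muln0.
have [-> | xw] := eqVneq x w; first by rewrite weight_hub A_hub /=; lia.
by have := weight_other xv xw; lia.
Qed.

Lemma leaf_counting : 4 * n <= 2 * nedges G + 6.
Proof.
have : \sum_x (4 + 2 * a * (x == w)) <=
       \sum_x (weight x + 2 * A x + 3 * (x == v) + 3 * (x == w)).
  by apply: leq_sum => x _; apply: weight_lower.
rewrite big_split -sum_weight.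
do 3![rewrite [in X in _ <= X]big_split].
rewrite /= !sum_nat_mull sum_nat_const card_ord !sum_nat_pred1.
lia.
Qed.

End LeafCounting.

Lemma K23_saturated_leaf_nedges n (G : sgraph n) (v : 'I_n) :
  K23_saturated G -> deg G v = 1 -> 2 * n - 3 <= nedges G.
Proof.
move=> [noK saturated] deg_v.
have [w nbrs_v] : exists w, [set u | adj G v u] = [set w] by apply/cards1P/eqP.
have leaf_adj y : adj G v y = (y == w) by rewrite -in_set1 -nbrs_v inE.
suff : 4 * n <= 2 * nedges G + 6 by lia.
apply: (leaf_counting leaf_adj) => x xv xw.
apply: (add_edge_leaf_K23 (@adj_sym _ G) (@adj_irr _ G) leaf_adj xv noK).
apply: saturated; first by rewrite eq_sym.
by rewrite leaf_adj.
Qed.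

Theorem lemma4p1 (n : nat) (G : sgraph n) :
  sat_K23_graph G -> min_degree_is G 1 -> 2 * n - 3 <= nedges G.
Proof.
by move=> [saturated _] [[v deg_v] _]; apply: K23_saturated_leaf_nedges deg_v.
Qed.
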